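(* Let $\{\tau_k\}$ be the merit parameter sequence generated by Algorithm 1 or Algorithm 2 (described in the context) under the Standing Assumption and Matrix Assumption of the context, and suppose the algorithm does not terminate finitely. Then there exist $k_\tau\in\mathbb{N}$ and $\tau_{\min}>0$ such that $\tau_k=\tau_{\min}$ for all $k\ge k_\tau$.
   Context: Notation: $g_k=\nabla f(x_k)$, $c_k=c(x_k)$, $J_k=\nabla c(x_k)^T$; $\phi(x,\tau)=\tau f(x)+\|c(x)\|_1$; $\Delta q(x,\tau,g,H,d)=-\tau(g^Td+\frac12\max\{d^THd,0\})+\|c(x)\|_1$. Matrix Assumption: symmetric $H_k$ with $\|H_k\|_2\le\kappa_H$ and $u^TH_ku\ge\zeta\|u\|_2^2$ whenever $J_ku=0$. Common iteration: $(d_k,y_k)$ solves $H_kd_k+J_k^Ty_k=-g_k$, $J_kd_k=-c_k$; stop if $g_k+J_k^Ty_k=0$ and $c_k=0$. $\tau_k^{trial}=\infty$ if $g_k^Td_k+\max\{d_k^TH_kd_k,0\}\le0$, else $\frac{(1-\sigma)\|c_k\|_1}{g_k^Td_k+\max\{d_k^TH_kd_k,0\}}$; $\tau_k=\tau_{k-1}$ if $\tau_{k-1}\le\tau_k^{trial}$, else $(1-\epsilon)\tau_k^{trial}$ (with $\tau_{-1}>0$, $\epsilon,\sigma\in(0,1)$); $x_{k+1}=x_k+\alpha_kd_k$. (SD) for trial $\alpha$: $\phi(x_k+\alpha d_k,\tau_k)\le\phi(x_k,\tau_k)-\eta\alpha\Delta q(x_k,\tau_k,g_k,H_k,d_k)$,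 $\eta\in(0,1)$. Algorithm 1 (inputs also $\rho>1$, $L_{-1}>0$, $\gamma_{-1,i}>0$): choose $L_{k,0}\in(0,L_{k-1}]$, $\gamma_{k,i,0}\in(0,\gamma_{k-1,i}]$; for $j=0,1,\dots$ with $\Lambda_{k,j}=\tau_kL_{k,j}+\sum_i\gamma_{k,i,j}$: $\widehat\alpha_{k,j}=\frac{2(1-\eta)\Delta q(x_k,\tau_k,g_k,H_k,d_k)}{\Lambda_{k,j}\|d_k\|_2^2}$, $\widetilde\alpha_{k,j}=\widehat\alpha_{k,j}-\frac{4\|c_k\|_1}{\Lambda_{k,j}\|d_k\|_2^2}$; $\alpha_{k,j}=\widehat\alpha_{k,j}$ if $\widehat\alpha_{k,j}<1$, $1$ if $\widetilde\alpha_{k,j}\le1\le\widehat\alpha_{k,j}$, $\widetilde\alpha_{k,j}$ if $\widetilde\alpha_{k,j}>1$; accept ($\alpha_k=\alpha_{k,j}$, $L_k=L_{k,j}$, $\gamma_{k,i}=\gamma_{k,i,j}$) if (SD) holds or if both $f(x_k+\alpha_{k,j}d_k)\le f(x_k)+\alpha_{k,j}g_k^Td_k+\frac12L_{k,j}\alpha_{k,j}^2\|d_k\|_2^2$ (LF) and $|c_i(x_k+\alpha_{k,j}d_k)|\le|c_i(x_k)+\alpha_{k,j}\nabla c_i(x_k)^Td_k|+\frac12\gamma_{k,i,j}\alpha_{k,j}^2\|d_k\|_2^2$ (LC$_i$) for all $i$; otherwise multiply $L_{k,j}$ by $\rho$ if (LF) fails and $\gamma_{k,i,j}$ by $\rho$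 if (LC$_i$) fails. Algorithm 2 (inputs also $\nu\in(0,1)$, $\alpha>0$): $\alpha_k=\nu^j\alpha$ for the smallest $j\ge0$ such that (SD) holds. Standing Assumption: an open convex set $\mathcal X$ contains all iterates and trial points $x_k+\alpha_{k,j}d_k$; $f$ is $C^1$, bounded below on $\mathcal X$, $\nabla f$ bounded and $L$-Lipschitz on $\mathcal X$; $c$, $\nabla c^T$ bounded on $\mathcal X$; $\nabla c_i$ is $\gamma_i$-Lipschitz on $\mathcal X$; singular values of $\nabla c(x)^T$ bounded away from zero uniformly over $\mathcal X$. *)

From HB Require Import structures.
From mathcomp Require Import all_boot all_order all_algebra.
From mathcomp Require Import all_classical all_reals all_analysis.
Set Implicit Arguments. Unset Strict Implicit. Unset Printing Implicit Defensive.
Import Order.TTheory GRing.Theory Num.Theory.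
Import numFieldNormedType.Exports.
Local Open Scope classical_set_scope.
Local Open Scope ring_scope.

Section Defs.
Variable R : realType.

Definition dotv (n : nat) (u v : 'cV[R]_n) : R := \sum_(i < n) u i 0 * v i 0.
Definition norm2 (n : nat) (u : 'cV[R]_n) : R := Num.sqrt (\sum_(i < n) u i 0 ^+ 2).
Definition norm1 (n : nat) (u : 'cV[R]_n) : R := \sum_(i < n) `|u i 0|.

(* The i-th row of J, seen as a column vector (the gradient of c_i). *)
Definition rowv (m n : nat) (J : 'M[R]_(m, n)) (i : 'I_m) : 'cV[R]_n := (row i J)^T.

Definition convex_set_cV (n : nat) (X : set 'cV[R]_n) : Prop :=
  forall u v t, X u -> X v -> 0 <= t <= 1 -> X ((1 - t) *: u + t *: v).

Definition singular_value (m n : nat) (J : 'M[R]_(m, n)) (s : R) : Prop :=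
  0 <= s /\ eigenvalue (J *m J^T) (s ^+ 2).

Definition spec_norm_le (n : nat) (H : 'M[R]_n) (k : R) : Prop :=
  forall u : 'cV[R]_n, norm2 (H *m u) <= k * norm2 u.

Definition phi (n m : nat) (f : 'cV[R]_n -> R) (c : 'cV[R]_n -> 'cV[R]_m)
  (x : 'cV[R]_n) (tau : R) : R := tau * f x + norm1 (c x).

Definition dq (n m : nat) (cx : 'cV[R]_m) (tau : R) (g : 'cV[R]_n)
  (H : 'M[R]_n) (d : 'cV[R]_n) : R :=
  - tau * (dotv g d + 2^-1 * Num.max (dotv d (H *m d)) 0) + norm1 cx.

(* merit parameter update: tau_k from tau_{k-1};
   tau_trial = +oo when g'd + max(d'Hd,0) <= 0 *)
Definition tau_update (eps sigma taup : R) (q : R) (c1 : R) : R :=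
  if q <= 0 then taup
  else let tr := (1 - sigma) * c1 / q in
       if taup <= tr then taup else (1 - eps) * tr.

Definition SD (n m : nat) (f : 'cV[R]_n -> R) (c : 'cV[R]_n -> 'cV[R]_m)
  (eta tau a : R) (x g d : 'cV[R]_n) (H : 'M[R]_n) : bool :=
  phi f c (x + a *: d) tau <= phi f c x tau - eta * a * dq (c x) tau g H d.

Definition LFcond (n : nat) (f : 'cV[R]_n -> R) (L a : R) (x g d : 'cV[R]_n) : bool :=
  f (x + a *: d) <= f x + a * dotv g d + 2^-1 * L * a ^+ 2 * norm2 d ^+ 2.

Definition LCcond (n m : nat) (c : 'cV[R]_n -> 'cV[R]_m) (J : 'M[R]_(m, n))
  (i : 'I_m) (gi a : R) (x d : 'cV[R]_n) : bool :=
  `|c (x + a *: d) i 0| <= `|c x i 0 + a * dotv (rowv J i) d|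
                            + 2^-1 * gi * a ^+ 2 * norm2 d ^+ 2.

Definition alpha1 (n m : nat) (eta Lam : R) (cx : 'cV[R]_m) (tau : R)
  (g : 'cV[R]_n) (H : 'M[R]_n) (d : 'cV[R]_n) : R :=
  let ahat := 2 * (1 - eta) * dq cx tau g H d / (Lam * norm2 d ^+ 2) in
  let atil := ahat - 4 * norm1 cx / (Lam * norm2 d ^+ 2) in
  if ahat < 1 then ahat else if atil <= 1 then 1 else atil.

(* L k, gam k i are
   L_k, gamma_{k,i}; Lkj k j, gkj k j i are L_{k,j}, gamma_{k,i,j}; jk k is
   the accepted inner index.  Trial points are required to lie in X
   (Standing Assumption). *)
Definition alg1_stepsizes (n m : nat) (X : set 'cV[R]_n)
  (f : 'cV[R]_n -> R) (gf : 'cV[R]_n -> 'cV[R]_n)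
  (c : 'cV[R]_n -> 'cV[R]_m) (Jc : 'cV[R]_n -> 'M[R]_(m, n))
  (eta rho Lm1 : R) (gm1 : 'I_m -> R)
  (x : nat -> 'cV[R]_n) (H : nat -> 'M[R]_n) (d : nat -> 'cV[R]_n)
  (tau alpha : nat -> R) : Prop :=
  1 < rho /\ 0 < Lm1 /\ (forall i, 0 < gm1 i) /\
  exists (L : nat -> R) (gam : nat -> 'I_m -> R)
         (Lkj : nat -> nat -> R) (gkj : nat -> nat -> 'I_m -> R) (jk : nat -> nat),
  forall k : nat,
    let Lprev := if k is k'.+1 then L k' else Lm1 in
    let gprev i := if k is k'.+1 then gam k' i else gm1 i in
    let akj j := alpha1 eta (tau k * Lkj k j + \sum_(i < m) gkj k j i)
                        (c (x k)) (tau k) (gf (x k)) (H k) (d k) in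
    let LF j := LFcond f (Lkj k j) (akj j) (x k) (gf (x k)) (d k) in
    let LC j i := LCcond c (Jc (x k)) i (gkj k j i) (akj j) (x k) (d k) in
    let acc j := SD f c eta (tau k) (akj j) (x k) (gf (x k)) (d k) (H k)
                 || (LF j && [forall i, LC j i]) in
    (0 < Lkj k 0 <= Lprev) /\
    (forall i, 0 < gkj k 0 i <= gprev i) /\
    [/\ (forall j, (j < jk k)%N ->
           ~~ acc j /\
           Lkj k j.+1 = (if LF j then Lkj k j else rho * Lkj k j) /\
           (forall i, gkj k j.+1 i = (if LC j i then gkj k j i else rho * gkj k j i))),
        acc (jk k),
        [/\ alpha k = akj (jk k), L k = Lkj k (jk k) &
            forall i, gam k i = gkj k (jk k) i] &
        (forall j, (j <= jk k)%N -> X (x k + akj j *: d k))].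

Definition alg2_stepsizes (n m : nat) (X : set 'cV[R]_n)
  (f : 'cV[R]_n -> R) (gf : 'cV[R]_n -> 'cV[R]_n)
  (c : 'cV[R]_n -> 'cV[R]_m)
  (eta nu abar : R)
  (x : nat -> 'cV[R]_n) (H : nat -> 'M[R]_n) (d : nat -> 'cV[R]_n)
  (tau alpha : nat -> R) : Prop :=
  0 < nu < 1 /\ 0 < abar /\
  forall k : nat, exists jk : nat,
    let SDj j := SD f c eta (tau k) (nu ^+ j * abar) (x k) (gf (x k)) (d k) (H k) in
    [/\ alpha k = nu ^+ jk * abar, SDj jk,
        (forall j, (j < jk)%N -> ~~ SDj j) &
        (forall j, (j <= jk)%N -> X (x k + (nu ^+ j * abar) *: d k))].

End Defs.

(* Whenever the merit parameter changes it shrinks at least by the factor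
   1 - eps, and the new value (1 - eps) tau_trial is at least
   (1 - eps)(1 - sigma)/K as soon as the model quantity g'd + max(d'Hd, 0)
   is at most K ||c||_1 along the iterates.
   Such a uniform K exists: split d = u + v with v = J^T (J J^T)^-1 (-c) and
   J u = 0.  The lower bound on singular values gives ||v|| <= ||c|| / s_min;
   curvature of H on the null space of J bounds u; J^T y = -g - H d bounds the
   multiplier y; and g'd = y'c - d'Hd with -d'Hd <= (kH^2/zeta + kH) ||v||^2.
   Finally, a sequence bounded away from 0 that either stays put or drops by a
   fixed factor drops only finitely often. *)

From HB Require Import structures.
From mathcomp Require Import all_boot all_order all_algebra.
From mathcomp Require Import all_classical all_reals all_analysis.
From mathcomp Require Import ring lra.
Import Order.TTheory GRing.Theory Num.Theory.
Import numFieldNormedType.Exports.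
Local Open Scope classical_set_scope.
Local Open Scope ring_scope.
Set Implicit Arguments. Unset Strict Implicit. Unset Printing Implicit Defensive.

Section Euclidean.
Variables (R : realType) (n : nat).
Implicit Types u v w : 'cV[R]_n.

Lemma dotvC u v : dotv u v = dotv v u.
Proof. by apply: eq_bigr => i _; rewrite mulrC. Qed.

Lemma dotvDl u v w : dotv (u + v) w = dotv u w + dotv v w.
Proof. by rewrite /dotv -big_split; apply: eq_bigr => i _; rewrite mxE mulrDl. Qed.

Lemma dotvZl k u v : dotv (k *: u) v = k * dotv u v.
Proof. by rewrite /dotv mulr_sumr; apply: eq_bigr => i _; rewrite mxE mulrA. Qed.

Lemma dotvNl u v : dotv (- u) v = - dotv u v.
Proof. by rewrite -scaleN1r dotvZl mulN1r. Qed.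

Lemma dotvBl u v w : dotv (u - v) w = dotv u w - dotv v w.
Proof. by rewrite dotvDl dotvNl. Qed.

Lemma dotvDr u v w : dotv u (v + w) = dotv u v + dotv u w.
Proof. by rewrite dotvC dotvDl !(dotvC u). Qed.

Lemma dotvNr u v : dotv u (- v) = - dotv u v.
Proof. by rewrite dotvC dotvNl dotvC. Qed.

Lemma dotvZr k u v : dotv u (k *: v) = k * dotv u v.
Proof. by rewrite dotvC dotvZl dotvC. Qed.

Lemma dotvBr u v w : dotv u (v - w) = dotv u v - dotv u w.
Proof. by rewrite dotvDr dotvNr. Qed.

Lemma dotv0l v : dotv 0 v = 0.
Proof. by rewrite /dotv big1 // => i _; rewrite mxE mul0r. Qed.

Lemma dotvE u v : dotv u v = (u^T *m v) 0 0.
Proof. by rewrite mxE; apply: eq_bigr => i _; rewrite mxE. Qed.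

Lemma dotvvE v : dotv v v = \sum_(i < n) v i 0 ^+ 2.
Proof. by apply: eq_bigr => i _; rewrite expr2. Qed.

Lemma dotvv_ge0 v : 0 <= dotv v v.
Proof. by rewrite dotvvE; apply: sumr_ge0 => i _; exact: sqr_ge0. Qed.

Lemma dotvv_eq0 v : (dotv v v == 0) = (v == 0).
Proof.
apply/idP/eqP => [|->]; last by rewrite dotv0l.
rewrite dotvvE psumr_eq0 => [/allP v0|i _]; last exact: sqr_ge0.
apply/colP => i; rewrite mxE.
by have := v0 i (mem_index_enum _); rewrite /= sqrf_eq0 => /eqP.
Qed.

Lemma norm2_sqr v : norm2 v ^+ 2 = dotv v v.
Proof. by rewrite /norm2 -dotvvE sqr_sqrtr // dotvv_ge0. Qed.

Lemma norm2_0 : norm2 (0 : 'cV[R]_n) = 0.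
Proof. by rewrite /norm2 big1 ?sqrtr0 // => i _; rewrite mxE expr0n. Qed.

Lemma norm2_eq0 v : (norm2 v == 0) = (v == 0).
Proof.
apply/idP/eqP => [/eqP v0|->]; last by rewrite norm2_0.
by apply/eqP; rewrite -dotvv_eq0 -norm2_sqr v0 expr0n.
Qed.

Lemma norm2_ge0 v : 0 <= norm2 v.
Proof. exact: sqrtr_ge0. Qed.

Lemma norm2N v : norm2 (- v) = norm2 v.
Proof. by rewrite /norm2; congr Num.sqrt; apply: eq_bigr => i _; rewrite mxE sqrrN. Qed.

Lemma norm2_gt0 v : v != 0 -> 0 < norm2 v.
Proof. by move=> v0; rewrite lt0r norm2_eq0 v0 norm2_ge0. Qed.

Lemma cauchy_schwarz u v : dotv u v <= norm2 u * norm2 v.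
Proof.
have [->|/norm2_gt0 a_gt0] := eqVneq u 0; first by rewrite dotv0l mulr_ge0 ?norm2_ge0.
have [->|/norm2_gt0 b_gt0] := eqVneq v 0.
  by rewrite dotvC dotv0l mulr_ge0 ?norm2_ge0.
set a := norm2 u in a_gt0 *; set b := norm2 v in b_gt0 *.
have := dotvv_ge0 (b *: u - a *: v).
rewrite !(dotvBl, dotvBr, dotvZl, dotvZr) -!norm2_sqr -/a -/b (dotvC v u) => h.
have : 0 < a * b by exact: mulr_gt0.
nra.
Qed.

Lemma norm2D u v : norm2 (u + v) <= norm2 u + norm2 v.
Proof.
rewrite -(ler_pXn2r (_ : 0 < 2)%N) ?nnegrE ?addr_ge0 ?norm2_ge0 //.
rewrite norm2_sqr dotvDl !dotvDr (dotvC v u) sqrrD -!norm2_sqr.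
have := cauchy_schwarz u v; lra.
Qed.

Lemma norm2_le_norm1 v : norm2 v <= norm1 v.
Proof.
have norm1_ge0 : 0 <= norm1 v by apply: sumr_ge0.
rewrite -(ler_pXn2r (_ : 0 < 2)%N) ?nnegrE ?norm2_ge0 // norm2_sqr dotvvE.
rewrite /norm1; under eq_bigr do rewrite -real_normK ?num_real //.
elim: (index_enum _) => [|i r IH]; first by rewrite !big_nil expr0n.
rewrite !big_cons sqrrD -addrA lerD2l (le_trans IH) // lerDr.
by rewrite mulrn_wge0 ?mulr_ge0 ?sumr_ge0.
Qed.

End Euclidean.

Lemma dotv_mulTmx (R : realType) m n (A : 'M[R]_(m, n)) (z : 'cV[R]_m) v :
  dotv (A^T *m z) v = dotv z (A *m v).
Proof. by rewrite !dotvE trmx_mul trmxK mulmxA. Qed.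

(* Row vectors, to match [eigenvalue] (left eigenvectors) and [rV_compact]. *)
Section Rayleigh.
Variables (R : realType) (m : nat).
Implicit Types (A : 'M[R]_m) (a b : 'rV[R]_m).

Definition qform A a b : R := (a *m A *m b^T) 0 0.

Lemma qformC A a b : A^T = A -> qform A a b = qform A b a.
Proof.
move=> A_sym; rewrite /qform.
have -> : (a *m A *m b^T) 0 0 = (a *m A *m b^T)^T 0 0 by rewrite [RHS]mxE.
by rewrite !trmx_mul trmxK A_sym mulmxA.
Qed.

Lemma qform_expand A a b t : A^T = A ->
  qform A (a + t *: b) (a + t *: b) =
  qform A a a + 2 * t * qform A a b + t ^+ 2 * qform A b b.
Proof.
move=> A_sym; have := qformC a b A_sym; rewrite /qform => ba.
rewrite linearD /= linearZ /= !mulmxDl !mulmxDr -!scalemxAl -!scalemxAr.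
rewrite !mxE; move: ba; rewrite !mxE => ->.
ring.
Qed.

Lemma qformZ A a k : A^T = A -> qform A (k *: a) (k *: a) = k ^+ 2 * qform A a a.
Proof.
move=> A_sym; have := qform_expand 0 a k A_sym; rewrite add0r => ->.
by rewrite /qform !mul0mx mxE mulr0 !add0r.
Qed.

Lemma qform_continuous A : continuous (fun a => qform A a a).
Proof.
have qformE a : qform A a a = \sum_j (\sum_i a 0 i * A i j) * a 0 j.
  by rewrite /qform mxE; apply: eq_bigr => j _; rewrite !mxE.
under eq_fun do rewrite qformE.
apply: continuous_big => [|j _ a]; first exact: add_continuous.
apply: continuousM; last exact: coord_continuous.
apply: continuous_big => [|i _ b]; first exact: add_continuous.
by apply: continuousM; [exact: coord_continuous | exact: cst_continuous].
Qed.

Lemma qform1E a : qform 1%:M a a = \sum_i a 0 i ^+ 2.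
Proof. by rewrite /qform mulmx1 mxE; apply: eq_bigr => i _; rewrite !mxE expr2. Qed.

Lemma qform1_ge0 a : 0 <= qform 1%:M a a.
Proof. by rewrite qform1E; apply: sumr_ge0 => i _; exact: sqr_ge0. Qed.

Lemma qform1_eq0 a : (qform 1%:M a a == 0) = (a == 0).
Proof.
apply/idP/eqP => [|->]; last by rewrite /qform !mul0mx mxE.
rewrite qform1E psumr_eq0 => [/allP a0|i _]; last exact: sqr_ge0.
apply/rowP => i; rewrite mxE.
by have := a0 i (mem_index_enum _); rewrite /= sqrf_eq0 => /eqP.
Qed.

Lemma qform_shift A lam a :
  qform (A - lam%:M) a a = qform A a a - lam * qform 1%:M a a.
Proof.
by rewrite /qform mulmxBr mulmxBl mul_mx_scalar mulmx1 -scalemxAl !mxE.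
Qed.

Lemma quadratic_ge0_lin_eq0 (p q : R) : (forall t, 0 <= t * p + t ^+ 2 * q) -> p = 0.
Proof.
move=> pq_ge0; apply/eqP; apply/negP => /negP p0.
set k := `|q| + 1.
have k_gt0 : 0 < k by rewrite ltr_pwDr ?normr_ge0.
(* at t = -p / (2 k) the quadratic t p + t^2 k, which dominates, is negative *)
have := pq_ge0 (- p / (2 * k)).
have : q <= k by rewrite (le_trans (ler_norm q)) ?lerDl.
have : 0 < p ^+ 2 by rewrite exprn_even_gt0.
set t := - p / (2 * k).
have -> : p ^+ 2 = - 4 * k * (t * p + t ^+ 2 * k) by rewrite /t; field; lra.
have : 0 <= t ^+ 2 := sqr_ge0 t.
nra.
Qed.

Lemma qform_psd_kernel B w : B^T = B -> (forall a, 0 <= qform B a a) ->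
  qform B w w = 0 -> w *m B = 0.
Proof.
move=> B_sym B_psd Bw0; apply/rowP => j; rewrite [RHS]mxE.
pose e : 'rV[R]_m := delta_mx 0 j.
have wBe : qform B w e = (w *m B) 0 j by rewrite /qform trmx_delta -colE mxE.
apply: (quadratic_ge0_lin_eq0 (q := qform B e e / 4)) => t.
have := B_psd (w + (t / 2) *: e); rewrite qform_expand // Bw0 add0r wBe.
by congr (0 <= _); field.
Qed.

Lemma rayleigh_min_eigenvalue A : (0 < m)%N -> A^T = A ->
  exists2 lam, eigenvalue A lam & forall a, lam * qform 1%:M a a <= qform A a a.
Proof.
move=> m_gt0 A_sym; have I_sym : (1%:M : 'M[R]_m)^T = 1%:M by exact: trmx1.
pose S := [set a | qform 1%:M a a = 1].
have normalize a : a != 0 ->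
    let k := (Num.sqrt (qform 1%:M a a))^-1 in S (k *: a) /\ k ^+ 2 * qform 1%:M a a = 1.
  rewrite -qform1_eq0 => a0 k.
  suff k_a : k ^+ 2 * qform 1%:M a a = 1 by rewrite /S /= qformZ.
  by rewrite exprVn sqr_sqrtr ?qform1_ge0 ?mulVf.
have [w0 /set_mem w0S w0_min] : exists2 w0, w0 \in S & forall a, a \in S ->
    qform A w0 w0 <= qform A a a.
  apply: (@compact_EVT_min _ _ (fun a => qform A a a)).
  - have one_neq0 : const_mx 1 != 0 :> 'rV[R]_m.
      by apply/negP => /eqP/rowP/(_ (Ordinal m_gt0)); rewrite !mxE; exact/eqP/oner_neq0.
    by have [S1 _] := normalize _ one_neq0; exact: (ex_intro _ _ S1).
  - apply: (subclosed_compact _ (rV_compact (fun=> @segment_compact R (-1) 1))).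
      exact: (proj1 (continuous_closedP _) (@qform_continuous 1%:M) _ (@closed_eq R 1)).
    move=> a Sa i /=; rewrite in_itv /=.
    have : a 0 i ^+ 2 <= 1.
      by rewrite -Sa qform1E (bigD1 i) //= lerDl sumr_ge0 // => k _; exact: sqr_ge0.
    by move: (a 0 i) => ai ai_le1; apply/andP; split; nra.
  - by apply: continuous_subspaceT; exact: qform_continuous.
pose lam := qform A w0 w0.
have lam_min a : lam * qform 1%:M a a <= qform A a a.
  have [->|a0] := eqVneq a 0; first by rewrite /qform !mul0mx mxE mulr0.
  have [ka_S k_a] := normalize a a0.
  have := ler_wpM2r (qform1_ge0 a) (w0_min _ (mem_set ka_S)).
  by rewrite qformZ // mulrAC k_a mul1r.
exists lam => //; apply/eigenvalueP; exists w0; last first.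
  by rewrite -qform1_eq0 w0S oner_eq0.
apply/eqP; rewrite -subr_eq0 -mul_mx_scalar -mulmxBr; apply/eqP.
apply: qform_psd_kernel.
- by rewrite linearB /= A_sym tr_scalar_mx.
- by move=> a; rewrite qform_shift subr_ge0.
- by rewrite qform_shift w0S mulr1 subrr.
Qed.

End Rayleigh.

Section SingularValues.
Variable R : realType.

Lemma qform_trmx m (A : 'M[R]_m) (u : 'cV[R]_m) : qform A u^T u^T = dotv u (A *m u).
Proof. by rewrite /qform dotvE trmxK mulmxA. Qed.

Lemma eigenvalue_JJT_ge0 m n (J : 'M[R]_(m, n)) lam :
  eigenvalue (J *m J^T) lam -> 0 <= lam.
Proof.
move=> /eigenvalueP[e eJ e0].
have e_pos : 0 < qform 1%:M e e by rewrite lt0r qform1_eq0 e0 qform1_ge0.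
have : qform (J *m J^T) e e = lam * qform 1%:M e e.
  by rewrite /qform eJ -scalemxAl mulmx1 mxE.
rewrite [LHS](_ : _ = qform 1%:M (e *m J) (e *m J)); last first.
  by rewrite /qform mulmx1 trmx_mul !mulmxA.
have := qform1_ge0 (e *m J); nra.
Qed.

Lemma singular_value_lower_bound m n (J : 'M[R]_(m, n)) s0 :
  0 <= s0 -> (forall s, singular_value J s -> s0 <= s) ->
  forall w : 'cV[R]_m, s0 * norm2 w <= norm2 (J^T *m w).
Proof.
move=> s0_ge0 sv_ge w.
have [->|w0] := eqVneq w 0; first by rewrite mulmx0 !norm2_0 mulr0.
have m_gt0 : (0 < m)%N by case: m J w sv_ge w0 => // J w _; rewrite [w]flatmx0 eqxx.
have JJT_sym : (J *m J^T)^T = J *m J^T by rewrite trmx_mul trmxK.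
have [lam lam_eig lam_min] := rayleigh_min_eigenvalue m_gt0 JJT_sym.
have lam_ge0 := eigenvalue_JJT_ge0 lam_eig.
have s0_le : s0 ^+ 2 <= lam.
  have sv : singular_value J (Num.sqrt lam) by split; rewrite ?sqr_sqrtr ?sqrtr_ge0.
  by rewrite -(sqr_sqrtr lam_ge0) ler_pXn2r ?nnegrE ?sqrtr_ge0 ?sv_ge.
rewrite -(ler_pXn2r (_ : 0 < 2)%N) ?nnegrE ?mulr_ge0 ?norm2_ge0 //.
have := lam_min w^T; rewrite !qform_trmx mul1mx -mulmxA -dotv_mulTmx -!norm2_sqr.
rewrite exprMn; apply: le_trans; rewrite ler_wpM2r ?sqr_ge0 //.
Qed.

Lemma JJT_unitmx m n (J : 'M[R]_(m, n)) s0 :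
  0 < s0 -> (forall s, singular_value J s -> s0 <= s) -> J *m J^T \in unitmx.
Proof.
move=> s0_gt0 sv_ge; rewrite -row_free_unit -kermx_eq0.
apply/eqP/row_matrixP => i; rewrite row0; set r := row i _.
have rA0 : r *m (J *m J^T) = 0 by rewrite /r -row_mul mulmx_ker row0.
have JTr0 : J^T *m r^T = 0.
  apply/eqP; rewrite -dotvv_eq0 dotv_mulTmx mulmxA.
  by rewrite -[J *m J^T]trmxK trmx_mul trmxK -trmx_mul rA0 trmx0 dotvC dotv0l.
have := singular_value_lower_bound (ltW s0_gt0) sv_ge r^T.
rewrite JTr0 norm2_0 pmulr_rle0 // => nr_le0.
by apply: trmx_inj; apply/eqP; rewrite trmx0 -norm2_eq0 eq_le nr_le0 norm2_ge0.
Qed.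

End SingularValues.

Lemma le_of_mul_sqr_le (R : realType) (k a b : R) :
  0 <= a -> 0 <= b -> k * a ^+ 2 <= a * b -> k * a <= b.
Proof.
rewrite le0r => /orP[/eqP-> b_ge0 _|a_gt0 _]; first by rewrite mulr0.
by rewrite expr2 mulrCA ler_pM2l.
Qed.

Section NewtonStep.
Variables (R : realType) (m n : nat) (J : 'M[R]_(m, n)) (H : 'M[R]_n).
Variables (g d : 'cV[R]_n) (y c : 'cV[R]_m) (s0 kH zeta : R).
Hypotheses (s0_gt0 : 0 < s0) (kH_ge0 : 0 <= kH) (zeta_gt0 : 0 < zeta).
Hypothesis sv_ge : forall s, singular_value J s -> s0 <= s.
Hypothesis H_le : spec_norm_le H kH.
Hypothesis H_pd_ker : forall u, J *m u = 0 -> zeta * norm2 u ^+ 2 <= dotv u (H *m u).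
Hypothesis kkt_dual : H *m d + J^T *m y = - g.
Hypothesis kkt_primal : J *m d = - c.

Let z := invmx (J *m J^T) *m - c.
Let v := J^T *m z.
Let u := d - v.

Let d_split : d = u + v.
Proof. by rewrite /u subrK. Qed.

Lemma normal_step_eq : J *m v = - c.
Proof. by rewrite /v /z !mulmxA mulmxV ?mul1mx // (JJT_unitmx s0_gt0 sv_ge). Qed.

Lemma normal_step_le : s0 * norm2 v <= norm2 c.
Proof.
have v_sqr : norm2 v ^+ 2 <= norm2 z * norm2 c.
  by rewrite norm2_sqr {1}/v dotv_mulTmx normal_step_eq -(norm2N c) cauchy_schwarz.
have z_le : s0 * norm2 z <= norm2 v := singular_value_lower_bound (ltW s0_gt0) sv_ge z.
apply: le_of_mul_sqr_le; rewrite ?norm2_ge0 //.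
apply: le_trans (_ : s0 * (norm2 z * norm2 c) <= _); first by rewrite ler_pM2l.
by rewrite mulrA ler_wpM2r ?norm2_ge0.
Qed.

Lemma tangential_step_ker : J *m u = 0.
Proof. by rewrite /u mulmxBr kkt_primal normal_step_eq subrr. Qed.

Lemma tangential_step_le : zeta * norm2 u <= norm2 g + kH * norm2 v.
Proof.
have uHu : dotv u (H *m u) = - dotv u g - dotv u (H *m v).
  have Hd : H *m d = - g - J^T *m y by rewrite -kkt_dual addrK.
  rewrite {2}/u mulmxBr dotvBr Hd dotvBr dotvNr.
  by rewrite [dotv u (_ *m y)]dotvC dotv_mulTmx tangential_step_ker [dotv y _]dotvC dotv0l subr0.
have ug : - dotv u g <= norm2 u * norm2 g by rewrite -dotvNr -(norm2N g) cauchy_schwarz.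
have uHv : - dotv u (H *m v) <= norm2 u * (kH * norm2 v).
  rewrite -dotvNr (le_trans (cauchy_schwarz _ _)) // norm2N ler_wpM2l ?norm2_ge0 //.
have := H_pd_ker tangential_step_ker; rewrite uHu => u_sqr.
apply: le_of_mul_sqr_le; rewrite ?addr_ge0 ?mulr_ge0 ?norm2_ge0 //.
by rewrite mulrDr; lra.
Qed.

Lemma multiplier_le : s0 * norm2 y <= norm2 g + kH * (norm2 u + norm2 v).
Proof.
apply: le_trans (singular_value_lower_bound (ltW s0_gt0) sv_ge y) _.
have -> : J^T *m y = - g - H *m d by rewrite -kkt_dual addrAC subrr add0r.
apply: le_trans (norm2D _ _) _; rewrite !norm2N lerD2l.
apply: le_trans (H_le d) _; rewrite ler_wpM2l //.
by rewrite {1}d_split norm2D.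
Qed.

Lemma curvature_ge : - ((kH ^+ 2 / zeta + kH) * norm2 v ^+ 2) <= dotv d (H *m d).
Proof.
have cross a b : - dotv a (H *m b) <= norm2 a * (kH * norm2 b).
  by rewrite -dotvNr (le_trans (cauchy_schwarz _ _)) // norm2N ler_wpM2l ?norm2_ge0.
have dHd : dotv d (H *m d) =
    dotv u (H *m u) + dotv u (H *m v) + dotv v (H *m u) + dotv v (H *m v).
  by rewrite d_split mulmxDr dotvDl !dotvDr !addrA.
have := H_pd_ker tangential_step_ker; have := cross u v; have := cross v u.
have := cross v v; rewrite dHd.
set nu := norm2 u; set nv := norm2 v => vHv vHu uHv uHu.
have square : 0 <= zeta * nu ^+ 2 - 2 * kH * nu * nv + kH ^+ 2 / zeta * nv ^+ 2.
  have -> : zeta * nu ^+ 2 - 2 * kH * nu * nv + kH ^+ 2 / zeta * nv ^+ 2 =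
      (zeta * nu - kH * nv) ^+ 2 / zeta by field; rewrite gt_eqF.
  by rewrite divr_ge0 ?sqr_ge0 ?ltW.
lra.
Qed.

Lemma dotv_grad_step : dotv g d = dotv y c - dotv d (H *m d).
Proof.
rewrite -[g]opprK -kkt_dual dotvNl dotvDl dotv_mulTmx kkt_primal dotvNr.
by rewrite dotvC opprD opprK addrC.
Qed.

Lemma merit_model_le :
  dotv g d + Num.max (dotv d (H *m d)) 0 <=
  norm2 y * norm2 c + (kH ^+ 2 / zeta + kH) * norm2 v ^+ 2.
Proof.
have yc := cauchy_schwarz y c; have := curvature_ge.
have : 0 <= (kH ^+ 2 / zeta + kH) * norm2 v ^+ 2.
  by rewrite mulr_ge0 ?addr_ge0 ?divr_ge0 ?sqr_ge0 // ltW.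
rewrite dotv_grad_step; case: (leP (dotv d (H *m d)) 0) => dHd; lra.
Qed.

End NewtonStep.

Lemma merit_model_uniform_bound (R : realType) m n (s0 kH zeta Bg Bc : R) :
  0 < s0 -> 0 <= kH -> 0 < zeta -> 0 <= Bg -> 0 <= Bc ->
  exists2 K, 0 < K &
  forall (J : 'M[R]_(m, n)) (H : 'M[R]_n) (g d : 'cV[R]_n) (y c : 'cV[R]_m),
    (forall s, singular_value J s -> s0 <= s) -> spec_norm_le H kH ->
    (forall u, J *m u = 0 -> zeta * norm2 u ^+ 2 <= dotv u (H *m u)) ->
    H *m d + J^T *m y = - g -> J *m d = - c ->
    norm2 g <= Bg -> norm2 c <= Bc ->
    dotv g d + Num.max (dotv d (H *m d)) 0 <= K * norm2 c.
Proof.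
move=> s0_gt0 kH_ge0 zeta_gt0 Bg_ge0 Bc_ge0.
pose Bv := Bc / s0; pose Bu := (Bg + kH * Bv) / zeta.
pose By := (Bg + kH * (Bu + Bv)) / s0; pose C := kH ^+ 2 / zeta + kH.
have Bv_ge0 : 0 <= Bv := divr_ge0 Bc_ge0 (ltW s0_gt0).
have Bu_ge0 : 0 <= Bu := divr_ge0 (addr_ge0 Bg_ge0 (mulr_ge0 kH_ge0 Bv_ge0)) (ltW zeta_gt0).
have By_ge0 : 0 <= By.
  exact: divr_ge0 (addr_ge0 Bg_ge0 (mulr_ge0 kH_ge0 (addr_ge0 Bu_ge0 Bv_ge0))) (ltW s0_gt0).
have C_ge0 : 0 <= C := addr_ge0 (divr_ge0 (sqr_ge0 kH) (ltW zeta_gt0)) kH_ge0.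
exists (By + C * Bv / s0 + 1) => [|J H g d y c sv_ge H_le H_pd dual primal g_le c_le].
  exact: ltr_wpDl (addr_ge0 By_ge0 (divr_ge0 (mulr_ge0 C_ge0 Bv_ge0) (ltW s0_gt0))) ltr01.
have v_le := normal_step_le c s0_gt0 sv_ge.
have u_le := tangential_step_le s0_gt0 kH_ge0 sv_ge H_le H_pd dual primal.
have y_le := multiplier_le c s0_gt0 kH_ge0 sv_ge H_le dual.
have model := merit_model_le s0_gt0 kH_ge0 zeta_gt0 sv_ge H_le H_pd dual primal.
set nv := norm2 (J^T *m _) in v_le u_le y_le model *.
set nu := norm2 (d - _) in u_le y_le.
have nv_le : nv <= Bv by rewrite ler_pdivlMr // mulrC (le_trans v_le).
have nu_le : nu <= Bu.
  rewrite ler_pdivlMr // mulrC (le_trans u_le) // lerD // ler_wpM2l //.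
have ny_le : norm2 y <= By.
  rewrite ler_pdivlMr // mulrC (le_trans y_le) // lerD // ler_wpM2l // lerD //.
have nv_c : nv <= norm2 c / s0 by rewrite ler_pdivlMr // mulrC.
have yc : norm2 y * norm2 c <= By * norm2 c by rewrite ler_wpM2r ?norm2_ge0.
have vv : C * nv ^+ 2 <= C * (Bv * (norm2 c / s0)).
  by rewrite ler_wpM2l // expr2 ler_pM ?norm2_ge0.
rewrite -/C in model; have := norm2_ge0 c; lra.
Qed.

Section MeritParameter.
Variable R : realType.

Lemma tau_update_cases (eps sigma taup q c1 K : R) :
  0 < eps < 1 -> 0 < sigma < 1 -> 0 < K -> q <= K * c1 ->
  tau_update eps sigma taup q c1 = taup \/
  (1 - eps) * (1 - sigma) / K <= tau_update eps sigma taup q c1 <= (1 - eps) * taup.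
Proof.
move=> /andP[eps_gt0 eps_lt1] /andP[_ sigma_lt1] K_gt0 q_le.
rewrite /tau_update; case: leP => [_|q_gt0]; first by left.
case: ifP => [_|/negbT]; first by left.
rewrite -ltNge => trial_lt; right; rewrite -mulrA !ler_pM2l ?subr_gt0 // (ltW trial_lt).
by rewrite andbT -mulrA ler_pM2l ?subr_gt0 // ler_pdivlMr // mulrC ler_pdivrMr // mulrC.
Qed.

Lemma eventually_constant_of_ratio_drops (t : nat -> R) (r lo : R) :
  0 < r < 1 -> 0 < lo -> (forall k, lo <= t k) ->
  (forall k, t k.+1 = t k \/ t k.+1 <= r * t k) ->
  exists k0, forall k, (k0 <= k)%N -> t k = t k0.
Proof.
move=> /andP[r_gt0 r_lt1] lo_gt0 t_ge step.
have t_lb : has_lbound (range t) by exists lo => _ [k _ <-].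
pose l := inf (range t).
have l_ge : lo <= l by apply: lb_le_inf; [exists (t 0), 0 | move=> _ [k _ <-]].
have l_le k : l <= t k by apply: ge_inf => //; exists k.
have l_gt0 : 0 < l := lt_le_trans lo_gt0 l_ge.
(* once t comes within the factor r of its infimum, a further drop would undershoot it *)
have [_ [k0 _ <-]] : exists2 x, range t x & x < l + (l / r - l).
  apply: inf_adherent; first by rewrite subr_gt0 ltr_pdivlMr // gtr_pMr.
  by split => //; exists (t 0), 0.
rewrite addrC subrK => tk0_lt.
exists k0; elim=> [|k IH]; first by rewrite leqn0 => /eqP->.
rewrite leq_eqVlt => /orP[/eqP<- // | /IH tk].
case: (step k) => [->|drop] //; rewrite tk in drop.
have : r * t k0 < l by rewrite -ltr_pdivlMl // mulrC.
have := l_le k.+1; lra.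
Qed.

Lemma merit_parameter_eventually_constant (eps sigma tau_m1 K : R)
    (tau q c1 : nat -> R) :
  0 < eps < 1 -> 0 < sigma < 1 -> 0 < tau_m1 -> 0 < K ->
  (forall k, q k <= K * c1 k) ->
  (forall k, tau k = tau_update eps sigma (if k is k'.+1 then tau k' else tau_m1)
                                (q k) (c1 k)) ->
  exists (ktau : nat) (tau_min : R), 0 < tau_min /\
    forall k, (ktau <= k)%N -> tau k = tau_min.
Proof.
move=> eps01 sigma01 tau_m1_gt0 K_gt0 q_le tauE.
have cases k taup := tau_update_cases taup eps01 sigma01 K_gt0 (q_le k).
pose lo := Num.min tau_m1 ((1 - eps) * (1 - sigma) / K).
have lo_gt0 : 0 < lo.
  case/andP: eps01 => _ eps_lt1; case/andP: sigma01 => _ sigma_lt1.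
  by rewrite lt_min tau_m1_gt0 divr_gt0 ?mulr_gt0 ?subr_gt0.
have update_ge k taup : lo <= taup -> lo <= tau_update eps sigma taup (q k) (c1 k).
  case: (cases k taup) => [-> // | /andP[trial_ge _] _].
  by rewrite (le_trans _ trial_ge) // ge_min lexx orbT.
have tau_ge k : lo <= tau k by elim: k => [|k IH]; rewrite tauE update_ge // ge_min lexx.
have drops k : tau k.+1 = tau k \/ tau k.+1 <= (1 - eps) * tau k.
  by rewrite [tau k.+1]tauE; case: (cases k.+1 (tau k)) => [|/andP[]]; [left | right].
have r01 : 0 < 1 - eps < 1.
  by case/andP: eps01 => eps_gt0 eps_lt1; rewrite subr_gt0 eps_lt1 ltrBlDr ltrDl.
have [k0 const] := eventually_constant_of_ratio_drops r01 lo_gt0 tau_ge drops.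
by exists k0, (tau k0); split; [exact: lt_le_trans lo_gt0 (tau_ge k0) | ].
Qed.

End MeritParameter.

Unset Implicit Arguments. Set Strict Implicit.

Theorem lemma2p16 (R : realType) (n m : nat)
  (X : set 'cV[R]_n) (f : 'cV[R]_n -> R) (gf : 'cV[R]_n -> 'cV[R]_n)
  (c : 'cV[R]_n -> 'cV[R]_m) (Jc : 'cV[R]_n -> 'M[R]_(m, n))
  (Lf : R) (gam : 'I_m -> R) (kH zeta : R)
  (tau_m1 eps sigma eta : R)
  (x : nat -> 'cV[R]_n) (H : nat -> 'M[R]_n) (d : nat -> 'cV[R]_n)
  (y : nat -> 'cV[R]_m) (tau alpha : nat -> R)
  (* Standing Assumption *)
  (hXo : open X) (hXc : convex_set_cV X)
  (hfd : forall u, X u -> differentiable f u /\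
           ('d f u : 'cV[R]_n -> R) = (fun v => dotv (gf u) v))
  (hgfc : {in X, continuous gf})
  (hfb : exists fl, forall u, X u -> fl <= f u)
  (hgb : exists B, forall u, X u -> norm2 (gf u) <= B)
  (hgL : forall u v, X u -> X v -> norm2 (gf u - gf v) <= Lf * norm2 (u - v))
  (hcd : forall (i : 'I_m) u, X u ->
           differentiable (fun w => c w i 0) u /\
           ('d (fun w => c w i 0) u : 'cV[R]_n -> R) =
             (fun v => dotv (rowv (Jc u) i) v))
  (hcb : exists B, forall u, X u -> norm2 (c u) <= B)
  (hJb : exists B, forall u, X u -> forall i j, `|Jc u i j| <= B)
  (hJL : forall (i : 'I_m) u v, X u -> X v ->
           norm2 (rowv (Jc u) i - rowv (Jc v) i) <= gam i * norm2 (u - v))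
  (hsv : exists smin, 0 < smin /\
           forall u, X u -> forall s, singular_value (Jc u) s -> smin <= s)
  (* Matrix Assumption *)
  (hkH : 0 < kH) (hzeta : 0 < zeta)
  (hHsym : forall k, (H k)^T = H k)
  (hHn : forall k, spec_norm_le (H k) kH)
  (hHc : forall k (u : 'cV[R]_n), Jc (x k) *m u = 0 ->
           zeta * norm2 u ^+ 2 <= dotv u (H k *m u))
  (* parameters *)
  (htau0 : 0 < tau_m1) (heps : 0 < eps < 1) (hsigma : 0 < sigma < 1)
  (heta : 0 < eta < 1)
  (* common iteration *)
  (hxX : forall k, X (x k))
  (hlin1 : forall k, H k *m d k + (Jc (x k))^T *m y k = - gf (x k))
  (hlin2 : forall k, Jc (x k) *m d k = - c (x k))
  (hnoterm : forall k, ~ (gf (x k) + (Jc (x k))^T *m y k = 0 /\ c (x k) = 0))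
  (htau : forall k, tau k =
           tau_update eps sigma (if k is k'.+1 then tau k' else tau_m1)
             (dotv (gf (x k)) (d k) + Num.max (dotv (d k) (H k *m d k)) 0)
             (norm1 (c (x k))))
  (hx : forall k, x k.+1 = x k + alpha k *: d k)
  (* step sizes: Algorithm 1 or Algorithm 2 *)
  (halg : (exists rho Lm1 gm1,
             alg1_stepsizes X f gf c Jc eta rho Lm1 gm1 x H d tau alpha) \/
          (exists nu abar,
             alg2_stepsizes X f gf c eta nu abar x H d tau alpha)) :
  exists (ktau : nat) (tau_min : R), 0 < tau_min /\
    forall k, (ktau <= k)%N -> tau k = tau_min.
Proof.
have [s0 [s0_gt0 sv_ge]] := hsv.
have [Bg g_le] := hgb; have [Bc c_le] := hcb.
have Bg_ge0 : 0 <= Bg := le_trans (norm2_ge0 _) (g_le _ (hxX 0%N)).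
have Bc_ge0 : 0 <= Bc := le_trans (norm2_ge0 _) (c_le _ (hxX 0%N)).
have [K K_gt0 model_le] :=
  merit_model_uniform_bound m n s0_gt0 (ltW hkH) hzeta Bg_ge0 Bc_ge0.
apply: (merit_parameter_eventually_constant heps hsigma htau0 K_gt0 _ htau) => k.
have xkX := hxX k.
apply: le_trans (model_le _ _ _ _ _ _ (sv_ge _ xkX) (hHn k) (hHc k) (hlin1 k) (hlin2 k)
                  (g_le _ xkX) (c_le _ xkX)) _.
by rewrite ler_wpM2l ?(ltW K_gt0) ?norm2_le_norm1.
Qed.
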